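(* Let $n\ge 1$ and let $G=(N,\{\Sigma_i\mid i\in N\},S,o)$ be a game form. Then its $Ł_n$-valued effectivity function $E_G$ is a truly playable $Ł_n$-valued effectivity function.
   Context: For a positive integer $n$ let $Ł_n=\{0,\frac1n,\dots,\frac{n-1}{n},1\}$ with the Łukasiewicz operations $\neg x=1-x$, $x\oplus y=\min(x+y,1)$, $x\odot y=\max(x+y-1,0)$, $x\wedge y=\min(x,y)$, $x\vee y=\max(x,y)$. For a set $S$, the operations are applied to functions in $Ł_n^S$ pointwise; $0,1$ also denote constant functions; $\chi_Y$ is the characteristic function of $Y\subseteq S$. Standing assumptions: $N$ is a finite set of players, $S$ a set of outcome states, $|N|\ge2$, $|S|\ge 2$. Subsets $C\subseteq N$ are coalitions, $\overline C=N\setminus C$. A game form is $G=(N,\{\Sigma_i\mid i\in N\},S,o)$ with nonempty strategy sets $\Sigma_i$ and outcome map $o:\prod_{i\in N}\Sigma_i\to S$; for $\sigma_C\in\prod_{i\in C}\Sigma_i$, $\sigma_{\overline C}\in\prod_{i\in\overline C}\Sigma_i$, $\sigma_C\sigma_{\overline C}$ is the combined profile. The $Ł_n$-valued effectivity function of $G$ is $E_G(C,f)=\max_{\sigma_C}\min_{\sigma_{\overline C}} f(o(\sigma_C\sigma_{\overline C}))$ for $C\subseteq N$, $f\in Ł_n^S$. An $Ł_n$-valued effectivity function is any map $E:\mathcal P N\times Ł_n^S\to Ł_n$. It is: outcome monotonic if $f\ge g$ implies $E(C,f)\ge E(C,g)$ for all $C$; $N$-maximal if $\neg E(\varnothing,\neg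 f)\le E(N,f)$ for all $f$; superadditive if $E(C_1,f)\wedge E(C_2,g)\le E(C_1\cup C_2,f\wedge g)$ whenever $C_1\cap C_2=\varnothing$; homogeneous if $E(C,f\oplus f)=E(C,f)\oplus E(C,f)$ and $E(C,f\odot f)=E(C,f)\odot E(C,f)$ for all $C,f$; has liveness if $E(C,1)=1$ for all $C$; has safety if $E(C,0)=0$ for all $C$; principal if there is $g\in Ł_n^S$ with $\{f\mid E(\varnothing,f)=1\}=\{f\mid f\ge g\odot\cdots\odot g\ (n\text{ factors})\}$. $E$ is playable if it is outcome monotonic, $N$-maximal, superadditive, homogeneous and has liveness and safety; truly playable if playable and principal. *)

From mathcomp Require Import all_boot.
From Stdlib Require Import ClassicalEpsilon.
Set Implicit Arguments. Unset Strict Implicit. Unset Printing Implicit Defensive.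

(* Ł_n is encoded by numerators: k : 'I_n.+1 stands for k/n. *)
Definition Ln (n : nat) := 'I_n.+1.

Section Luk.
Variable n : nat.
Definition ltop : Ln n := ord_max.
Definition lbot : Ln n := ord0.
Definition lneg (x : Ln n) : Ln n := inord (n - x).
Definition loplus (x y : Ln n) : Ln n := inord (minn (x + y) n).
Definition lodot (x y : Ln n) : Ln n := inord ((x + y) - n).
Definition lmin (x y : Ln n) : Ln n := inord (minn x y).
Definition lmax (x y : Ln n) : Ln n := inord (maxn x y).
Definition lodotn (m : nat) (x : Ln n) : Ln n := iterop m lodot x ltop.
End Luk.

Definition pb (P : Prop) : bool := if excluded_middle_informative P then true else false.

(* infimum / supremum of a set of Ł_n values (= min / max when nonempty) *)
Definition linf (n : nat) (A : Ln n -> Prop) : Ln n :=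
  inord (\max_(k : 'I_n.+1 | pb (forall a, A a -> k <= a)) k).
Definition lsup (n : nat) (A : Ln n -> Prop) : Ln n :=
  inord (\big[minn/n]_(k : 'I_n.+1 | pb (forall a, A a -> a <= k)) k).

Definition effFun (N : finType) (S : Type) (n : nat) :=
  {set N} -> (S -> Ln n) -> Ln n.

Section Props.
Variables (N : finType) (S : Type) (n : nat) (E : effFun N S n).

Definition outcome_monotonic : Prop :=
  forall C (f g : S -> Ln n), (forall s, g s <= f s) -> E C g <= E C f.
Definition N_maximal : Prop :=
  forall f : S -> Ln n, lneg (E set0 (fun s => lneg (f s))) <= E setT f.
Definition superadditive : Prop :=
  forall (C1 C2 : {set N}) (f g : S -> Ln n), [disjoint C1 & C2] ->
    lmin (E C1 f) (E C2 g) <= E (C1 :|: C2) (fun s => lmin (f s) (g s)).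
Definition homogeneous : Prop :=
  forall C (f : S -> Ln n),
    E C (fun s => loplus (f s) (f s)) = loplus (E C f) (E C f) /\
    E C (fun s => lodot (f s) (f s)) = lodot (E C f) (E C f).
Definition liveness : Prop := forall C, E C (fun _ => ltop n) = ltop n.
Definition safety : Prop := forall C, E C (fun _ => lbot n) = lbot n.
Definition principal : Prop :=
  exists g : S -> Ln n, forall f : S -> Ln n,
    E set0 f = ltop n <-> (forall s, lodotn n (g s) <= f s).
Definition playable : Prop :=
  outcome_monotonic /\ N_maximal /\ superadditive /\ homogeneous /\ liveness /\ safety.
Definition truly_playable : Prop := playable /\ principal.
End Props.

(* A strategy profile of coalition C is represented by a full profile whose
   components outside C are ignored; combination sigma_C sigma_Cbar: *)
Definition combine (N : finType) (Sigma : N -> Type) (C : {set N})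
  (s1 s2 : forall i, Sigma i) : forall i, Sigma i :=
  fun i => if i \in C then s1 i else s2 i.

Definition EG (n : nat) (N : finType) (Sigma : N -> Type) (S : Type)
  (o : (forall i, Sigma i) -> S) : effFun N S n :=
  fun C f => lsup (fun v => exists s1 : forall i, Sigma i,
     v = linf (fun w => exists s2 : forall i, Sigma i,
                  w = f (o (combine C s1 s2)))).

(* The value E_G(C, f) is a max over strategies of C of a min over strategies
   of the complement, both over nonempty index sets, so they are attained.
   Hence E_G commutes with every monotone map of Ł_n, which gives homogeneity
   (x ↦ x ⊕ x and x ↦ x ⊙ x are monotone) and, applied to constants, liveness
   and safety. The empty coalition gets the min of f over the range of o and
   the grand coalition the max, which yields N-maximality and principality
   with g the indicator of the range of o (an idempotent of ⊙). For disjoint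
   coalitions, playing optimal strategies of both at once guarantees both
   values, which is superadditivity. *)

From mathcomp Require Import all_boot.
From Stdlib Require Import ClassicalEpsilon FunctionalExtensionality.
Set Implicit Arguments. Unset Strict Implicit. Unset Printing Implicit Defensive.

Lemma pbP (P : Prop) : reflect P (pb P).
Proof. by rewrite /pb; case: excluded_middle_informative => h; constructor. Qed.

Lemma ord_anti m (x y : 'I_m) : x <= y -> y <= x -> x = y.
Proof. by move=> xy yx; apply: val_inj; apply/anti_leq/andP. Qed.

Lemma bigminn_leq_cond (I : eqType) (r : seq I) (P : pred I) (F : I -> nat) x0 i :
  i \in r -> P i -> \big[minn/x0]_(j <- r | P j) F j <= F i.
Proof.
elim: r => //= j r IHr; rewrite inE big_cons => /orP[/eqP<- -> | ir Pi].
  exact: geq_minl.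
by case: (P j); rewrite ?geq_min IHr ?orbT.
Qed.

Section Bounds.
Variable n : nat.
Implicit Types (A : Ln n -> Prop) (a k : Ln n).

Lemma linf_val A :
  nat_of_ord (linf A) = \max_(k : 'I_n.+1 | pb (forall a, A a -> k <= a)) k.
Proof. by rewrite /linf inordK // ltnS; apply/bigmax_leqP => k _; apply: leq_ord. Qed.

Lemma linf_le A a : A a -> linf A <= a.
Proof. by move=> Aa; rewrite linf_val; apply/bigmax_leqP => k /pbP; apply. Qed.

Lemma linf_ge A k : (forall a, A a -> k <= a) -> k <= linf A.
Proof.
move=> lbk; rewrite linf_val.
exact: (leq_bigmax_cond (F := fun k : 'I_n.+1 => nat_of_ord k)) (introT (pbP _) lbk).
Qed.

Lemma linf_mem A a0 : A a0 -> A (linf A).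
Proof.
move=> Aa0; have Aa0b : pb (A a0) by apply/pbP.
case: (arg_minnP (P := fun k => pb (A k)) val Aa0b) => m /pbP Am m_min.
suff -> : linf A = m by [].
by apply: ord_anti; [exact: linf_le | apply: linf_ge => a /pbP; apply: m_min].
Qed.

Lemma lsup_val A :
  nat_of_ord (lsup A) = \big[minn/n]_(k : 'I_n.+1 | pb (forall a, A a -> a <= k)) k.
Proof.
rewrite /lsup inordK // ltnS; apply: (big_ind (fun x => x <= n)) => // [x y|k _].
  by rewrite geq_min => ->.
exact: leq_ord.
Qed.

Lemma lsup_ge A a : A a -> a <= lsup A.
Proof.
move=> Aa; rewrite lsup_val; apply: (big_ind (fun x => a <= x)) => [|x y|k /pbP]; last by apply.
  exact: leq_ord.
by rewrite leq_min => -> ->.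
Qed.

Lemma lsup_le A k : (forall a, A a -> a <= k) -> lsup A <= k.
Proof.
move=> ubk; rewrite lsup_val.
by apply: bigminn_leq_cond; [exact: mem_index_enum | apply/pbP].
Qed.

Lemma lsup_mem A a0 : A a0 -> A (lsup A).
Proof.
move=> Aa0; have Aa0b : pb (A a0) by apply/pbP.
case: (arg_maxnP (P := fun k => pb (A k)) val Aa0b) => m /pbP Am m_max.
suff -> : lsup A = m by [].
by apply: ord_anti; [apply: lsup_le => a /pbP; apply: m_max | exact: lsup_ge].
Qed.

End Bounds.

Section Families.
Variables (n : nat) (I : Type).
Implicit Types (F G : I -> Ln n) (k : Ln n).

Definition linf_img F := linf (fun w => exists i, w = F i).
Definition lsup_img F := lsup (fun w => exists i, w = F i).

Lemma linf_img_le F i : linf_img F <= F i.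
Proof. by apply: linf_le; exists i. Qed.

Lemma linf_img_ge F k : (forall i, k <= F i) -> k <= linf_img F.
Proof. by move=> lbk; apply: linf_ge => _ [i ->]. Qed.

Lemma lsup_img_ge F i : F i <= lsup_img F.
Proof. by apply: lsup_ge; exists i. Qed.

Lemma lsup_img_le F k : (forall i, F i <= k) -> lsup_img F <= k.
Proof. by move=> ubk; apply: lsup_le => _ [i ->]. Qed.

Lemma leq_linf_img F G : (forall i, F i <= G i) -> linf_img F <= linf_img G.
Proof. by move=> FG; apply: linf_img_ge => i; apply: leq_trans (linf_img_le F i) (FG i). Qed.

Lemma leq_lsup_img F G : (forall i, F i <= G i) -> lsup_img F <= lsup_img G.
Proof. by move=> FG; apply: lsup_img_le => i; apply: leq_trans (FG i) (lsup_img_ge G i). Qed.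

Lemma eq_linf_img F G : F =1 G -> linf_img F = linf_img G.
Proof. by move/functional_extensionality->. Qed.

Lemma eq_lsup_img F G : F =1 G -> lsup_img F = lsup_img G.
Proof. by move/functional_extensionality->. Qed.

Hypothesis I_inh : inhabited I.

Lemma linf_img_attained F : exists i, linf_img F = F i.
Proof.
by case: I_inh => i0; apply: (linf_mem (A := fun w => exists i, w = F i)); exists i0.
Qed.

Lemma lsup_img_attained F : exists i, lsup_img F = F i.
Proof.
by case: I_inh => i0; apply: (lsup_mem (A := fun w => exists i, w = F i)); exists i0.
Qed.

Lemma linf_img_const k : linf_img (fun=> k) = k.
Proof. by have [i ->] := linf_img_attained (fun=> k). Qed.

Lemma lsup_img_const k : lsup_img (fun=> k) = k.
Proof. by have [i ->] := lsup_img_attained (fun=> k). Qed.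

Lemma linf_img_homo F (h : Ln n -> Ln n) : {homo h : x y / x <= y} ->
  linf_img (fun i => h (F i)) = h (linf_img F).
Proof.
move=> h_homo; have [j hFj] := linf_img_attained (fun i => h (F i)).
have [i Fi] := linf_img_attained F.
apply: ord_anti; first by rewrite Fi; apply: (linf_img_le (fun i => h (F i))).
by rewrite hFj; apply/h_homo/linf_img_le.
Qed.

Lemma lsup_img_homo F (h : Ln n -> Ln n) : {homo h : x y / x <= y} ->
  lsup_img (fun i => h (F i)) = h (lsup_img F).
Proof.
move=> h_homo; have [j hFj] := lsup_img_attained (fun i => h (F i)).
have [i Fi] := lsup_img_attained F.
apply: ord_anti; first by rewrite hFj; apply/h_homo/lsup_img_ge.
by rewrite Fi; apply: (lsup_img_ge (fun i => h (F i))).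
Qed.

End Families.

Lemma lneg_val n (x : Ln n) : nat_of_ord (lneg x) = n - x.
Proof. by rewrite /lneg inordK // ltnS leq_subr. Qed.

Lemma lmin_val n (x y : Ln n) : nat_of_ord (lmin x y) = minn x y.
Proof. by rewrite /lmin inordK // ltnS geq_min -ltnS ltn_ord. Qed.

Lemma loplus_val n (x y : Ln n) : nat_of_ord (loplus x y) = minn (x + y) n.
Proof. by rewrite /loplus inordK // ltnS geq_minr. Qed.

Lemma lodot_val n (x y : Ln n) : nat_of_ord (lodot x y) = x + y - n.
Proof. by rewrite /lodot inordK // ltnS leq_subLR leq_add ?leq_ord. Qed.

Lemma lodotn_idem n (x : Ln n) k : lodot x x = x -> 0 < k -> lodotn k x = x.
Proof. by move=> xx; case: k => // k _; rewrite /lodotn iteropS; elim: k => //= k ->. Qed.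

Lemma lodot_top n : lodot (ltop n) (ltop n) = ltop n.
Proof. by apply: val_inj; rewrite /= lodot_val /= addnK. Qed.

Lemma lodot_bot n : lodot (lbot n) (lbot n) = lbot n.
Proof. by apply: val_inj; rewrite /= lodot_val. Qed.

Section GameForm.
Variables (n : nat) (N : finType) (Sigma : N -> Type) (S : Type)
  (o : (forall i, Sigma i) -> S).
Hypothesis profile_inh : inhabited (forall i, Sigma i).

Notation E := (@EG n N Sigma S o).
Implicit Types (C : {set N}) (f g : S -> Ln n).

Lemma EGE C f :
  E C f = lsup_img (fun s1 => linf_img (fun s2 => f (o (combine C s1 s2)))).
Proof. by []. Qed.

Lemma combine0 (s1 s2 : forall i, Sigma i) : combine set0 s1 s2 = s2.
Proof. by apply: functional_extensionality_dep => i; rewrite /combine in_set0. Qed.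

Lemma combineT (s1 s2 : forall i, Sigma i) : combine setT s1 s2 = s1.
Proof. by apply: functional_extensionality_dep => i; rewrite /combine in_setT. Qed.

Lemma combineUl C1 C2 (s t u : forall i, Sigma i) :
  combine C1 s (combine (C1 :|: C2) (combine C1 s t) u) =
  combine (C1 :|: C2) (combine C1 s t) u.
Proof.
by apply: functional_extensionality_dep => i; rewrite /combine in_setU; case: (i \in C1).
Qed.

Lemma combineUr C1 C2 (s t u : forall i, Sigma i) : [disjoint C1 & C2] ->
  combine C2 t (combine (C1 :|: C2) (combine C1 s t) u) =
  combine (C1 :|: C2) (combine C1 s t) u.
Proof.
move=> dis; apply: functional_extensionality_dep => i; rewrite /combine in_setU.
by case C2i: (i \in C2); rewrite ?orbT // (disjointFl dis C2i).
Qed.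

Lemma EG_set0 f : E set0 f = linf_img (fun p => f (o p)).
Proof.
rewrite EGE; under eq_lsup_img do under eq_linf_img do rewrite combine0.
exact: lsup_img_const.
Qed.

Lemma EG_setT f : E setT f = lsup_img (fun p => f (o p)).
Proof.
rewrite EGE; apply: eq_lsup_img => s1.
by under eq_linf_img do rewrite combineT; apply: linf_img_const.
Qed.

Lemma EG_homo C f (h : Ln n -> Ln n) : {homo h : x y / x <= y} ->
  E C (fun s => h (f s)) = h (E C f).
Proof.
move=> h_homo; rewrite !EGE.
under eq_lsup_img do rewrite linf_img_homo //.
exact: lsup_img_homo.
Qed.

Lemma EG_const C c : E C (fun=> c) = c.
Proof. by rewrite EGE !linf_img_const // lsup_img_const. Qed.

Lemma EG_outcome_monotonic : outcome_monotonic E.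
Proof. by move=> C f g gf; apply: leq_lsup_img => s1; apply: leq_linf_img => s2. Qed.

Lemma EG_N_maximal : N_maximal E.
Proof.
move=> f; rewrite lneg_val EG_set0 EG_setT.
have [p ->] := linf_img_attained profile_inh (fun p => lneg (f (o p))).
by rewrite lneg_val subKn ?leq_ord // (lsup_img_ge (fun p => f (o p))).
Qed.

Lemma EG_superadditive : superadditive E.
Proof.
move=> C1 C2 f g dis.
have [s E1] := lsup_img_attained profile_inh
  (fun s1 => linf_img (fun s2 => f (o (combine C1 s1 s2)))).
have [t E2] := lsup_img_attained profile_inh
  (fun s1 => linf_img (fun s2 => g (o (combine C2 s1 s2)))).
rewrite !EGE E1 E2; apply: leq_trans (lsup_img_ge _ (combine C1 s t)).
apply: linf_img_ge => u; rewrite !lmin_val leq_min; apply/andP; split.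
- by rewrite geq_min -(combineUl C1 C2 s t u) linf_img_le.
- by rewrite geq_min -(combineUr s t u dis) linf_img_le orbT.
Qed.

Lemma EG_homogeneous : homogeneous E.
Proof.
move=> C f; split.
- apply: (@EG_homo C f (fun x => loplus x x)) => x y xy.
  by rewrite !loplus_val leq_min geq_minr andbT geq_min leq_add.
- apply: (@EG_homo C f (fun x => lodot x x)) => x y xy.
  by rewrite !lodot_val leq_sub2r // leq_add.
Qed.

Lemma EG_principal : 0 < n -> principal E.
Proof.
move=> n_gt0; exists (fun s => if pb (exists p, o p = s) then ltop n else lbot n) => f.
have lodotn_top := lodotn_idem (lodot_top n) n_gt0.
rewrite EG_set0; split => [f_top s | f_top].
- case: pbP => [[p <-] | _]; last by rewrite lodotn_idem ?lodot_bot.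
  by rewrite lodotn_top -f_top linf_img_le.
- apply: ord_anti; first exact: leq_ord.
  apply: linf_img_ge => p; have := f_top (o p).
  by case: pbP => [_ | []]; [rewrite lodotn_top | exists p].
Qed.

End GameForm.

Theorem mainTheorem1 (n : nat) (N : finType) (Sigma : N -> Type) (S : Type)
  (o : (forall i, Sigma i) -> S)
  (hn : 1 <= n) (hN : 2 <= #|N|) (hS : exists s1 s2 : S, s1 <> s2)
  (hSigma : forall i, inhabited (Sigma i)) :
  truly_playable (@EG n N Sigma S o).
Proof.
have profile_inh : inhabited (forall i, Sigma i).
  by constructor => i; exact: epsilon (hSigma i) xpredT.
split; last exact: EG_principal.
split; first exact: EG_outcome_monotonic.
split; first exact: EG_N_maximal.
split; first exact: EG_superadditive.
split; first exact: EG_homogeneous.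
by split => C; apply: EG_const.
Qed.
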